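(* Let $\|\cdot\|$ be a Euclidean norm on $\mathbb{R}^d$ and $|\cdot|$ another norm on $\mathbb{R}^d$. Then there exists $\lambda<1$ (depending on the equivalence constants of the two norms) such that every curve $\gamma:I\to\mathbb{R}^d$ that is self-expanded with respect to $|\cdot|$ is a $\lambda$-curve with respect to $\|\cdot\|$.
   Context: $I\subset\mathbb{R}$ is an interval. A curve $\gamma:I\to\mathbb{R}^d$ is self-expanded with respect to a norm $|\cdot|$ if for all $t_1\le t_2\le t_3$ in $I$: $|\gamma(t_1)-\gamma(t_2)|\le|\gamma(t_1)-\gamma(t_3)|$. For $\lambda<1$, $\gamma$ is a $\lambda$-curve with respect to $\|\cdot\|$ if for all $t_1\le t_2\le t_3$ in $I$: $\|\gamma(t_1)-\gamma(t_2)\|\le\|\gamma(t_1)-\gamma(t_3)\|+\lambda\|\gamma(t_2)-\gamma(t_3)\|$. *)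

From HB Require Import structures.
From mathcomp Require Import all_boot all_order all_algebra.
From mathcomp Require Import reals.
Set Implicit Arguments. Unset Strict Implicit. Unset Printing Implicit Defensive.
Import Order.TTheory GRing.Theory Num.Theory.
Local Open Scope ring_scope.

Section Defs.
Variables (R : realType) (d : nat).

Definition is_norm (N : 'rV[R]_d -> R) : Prop :=
  [/\ (forall x, 0 <= N x),
      (forall x, N x = 0 -> x = 0),
      (forall (k : R) x, N (k *: x) = `|k| * N x) &
      (forall x y, N (x + y) <= N x + N y)].

Definition is_inner_product (B : 'rV[R]_d -> 'rV[R]_d -> R) : Prop :=
  [/\ (forall x y, B x y = B y x),
      (forall (k : R) x y z, B (k *: x + y) z = k * B x z + B y z) &
      (forall x, x != 0 -> 0 < B x x)].

Definition is_euclidean_norm (N : 'rV[R]_d -> R) : Prop :=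
  exists B, is_inner_product B /\ forall x, N x = Num.sqrt (B x x).

Definition is_interval (I : R -> Prop) : Prop :=
  forall s t u, I s -> I u -> s <= t -> t <= u -> I t.

Definition self_expanded (N : 'rV[R]_d -> R) (I : R -> Prop)
    (gamma : R -> 'rV[R]_d) : Prop :=
  forall t1 t2 t3, I t1 -> I t2 -> I t3 -> t1 <= t2 -> t2 <= t3 ->
    N (gamma t1 - gamma t2) <= N (gamma t1 - gamma t3).

Definition lambda_curve (lam : R) (N : 'rV[R]_d -> R) (I : R -> Prop)
    (gamma : R -> 'rV[R]_d) : Prop :=
  forall t1 t2 t3, I t1 -> I t2 -> I t3 -> t1 <= t2 -> t2 <= t3 ->
    N (gamma t1 - gamma t2)
      <= N (gamma t1 - gamma t3) + lam * N (gamma t2 - gamma t3).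

End Defs.

From HB Require Import structures.
From mathcomp Require Import all_boot all_order all_algebra.
From mathcomp Require Import reals.
From mathcomp Require Import ring lra.
Import Order.TTheory GRing.Theory Num.Theory.
Local Open Scope ring_scope.

(* Put [v = gamma t1 - gamma t3] and [w = gamma t3 - gamma t2]: self-expansion
   says [N (v + w) <= N v], and we want [E (v + w) <= E v + lam E w].
   Comparing the norms gives [E w <= (2b/a) E v].  The vector
   [p = E v^2 w - <v,w> v] is orthogonal to [v] and
   [(E v^2 + <v,w>) v = E v^2 (v + w) - p], so [<v,w> N v <= N p]; comparing
   norms again bounds the cosine of the angle between [v] and [w] by
   [b / sqrt (a^2 + b^2) <= 1 - eta] with [eta = a^2 / (2 (a^2 + b^2))].
   Expanding [E (v + w)^2] then works for [lam = 1 - eta / (1 + 2b/a)]. *)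

Section Arithmetic.
Context {R : realFieldType}.

Definition angle_gap (a b : R) : R := a ^+ 2 / (2 * (a ^+ 2 + b ^+ 2)).

Lemma angle_gap_gt0 (a b : R) : 0 < a -> 0 < angle_gap a b.
Proof. by move=> a0; rewrite divr_gt0 ?exprn_gt0 //; nra. Qed.

Lemma angle_gap_le_half (a b : R) : 0 < a -> angle_gap a b <= 2^-1.
Proof.
move=> a0; have s0 : 0 < a ^+ 2 + b ^+ 2 by nra.
rewrite /angle_gap ler_pdivrMr; last by nra.
by rewrite mulKf ?pnatr_eq0 // lerDl sqr_ge0.
Qed.

Lemma le_of_weighted_sqr (a b x y : R) : 0 < a -> 0 <= x ->
  (0 <= y -> (a ^+ 2 + b ^+ 2) * y ^+ 2 <= b ^+ 2 * x ^+ 2) ->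
  y <= (1 - angle_gap a b) * x.
Proof.
move=> a0 x0 hyx; have eta_half := angle_gap_le_half a b a0.
have cx0 : 0 <= (1 - angle_gap a b) * x by rewrite mulr_ge0 // subr_ge0; lra.
have [y_le0|y_gt0] := lerP y 0; first exact: le_trans y_le0 cx0.
move/(_ (ltW y_gt0)) in hyx.
have s0 : 0 < a ^+ 2 + b ^+ 2 by nra.
have gap2 : 2 * angle_gap a b * (a ^+ 2 + b ^+ 2) = a ^+ 2.
  by rewrite /angle_gap; field; rewrite gt_eqF.
have gap_sqr : b ^+ 2 <= (a ^+ 2 + b ^+ 2) * (1 - angle_gap a b) ^+ 2.
  have := mulr_ge0 (ltW s0) (sqr_ge0 (angle_gap a b)); nra.
have : y ^+ 2 <= ((1 - angle_gap a b) * x) ^+ 2.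
  rewrite -(ler_pM2l s0); apply: le_trans hyx _.
  have := ler_wpM2r (sqr_ge0 x) gap_sqr; nra.
by rewrite (ler_sqr (ltW y_gt0) cx0).
Qed.

(* With [delta = eta / (1 + k)], [(1 - delta)^2 >= 1 - 2 delta] and the loss
   [2 delta r (e + r)] is at most [2 eta e r] because [r <= k e]. *)
Lemma sqr_le_of_angle_gap (e r beta eta k : R) : 0 <= e -> 0 <= r -> 0 <= eta ->
  0 <= k -> r <= k * e -> beta <= (1 - eta) * (e * r) ->
  e ^+ 2 + 2 * beta + r ^+ 2 <= (e + (1 - eta / (1 + k)) * r) ^+ 2.
Proof.
move=> e0 r0 eta0 k0 rke hbeta.
have k1 : 0 < 1 + k by lra.
set delta := eta / (1 + k).
have delta0 : 0 <= delta by rewrite divr_ge0 // ltW.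
have hdelta : delta * (1 + k) = eta by rewrite mulfVK ?gt_eqF.
have cross : delta * (e + r) <= eta * e by nra.
nra.
Qed.

Definition curve_lambda (a b : R) : R := 1 - angle_gap a b / (1 + 2 * b / a).

Lemma curve_lambda_lt1 (a b : R) : 0 < a -> 0 < b -> curve_lambda a b < 1.
Proof.
move=> a0 b0; rewrite /curve_lambda gtrBl divr_gt0 ?angle_gap_gt0 //.
by rewrite ltr_wpDr ?divr_ge0 ?mulr_ge0 ?ltW.
Qed.

Lemma curve_lambda_ge0 (a b : R) : 0 < a -> 0 < b -> 0 <= curve_lambda a b.
Proof.
move=> a0 b0; have eta_half := angle_gap_le_half a b a0.
have k0 : 0 <= 2 * b / a by rewrite divr_ge0 ?mulr_ge0 ?ltW.
rewrite /curve_lambda subr_ge0 ler_pdivrMr; lra.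
Qed.

End Arithmetic.

Section InnerProduct.
Context {R : realType} {d : nat} {B : 'rV[R]_d -> 'rV[R]_d -> R}.
Hypothesis HB : is_inner_product B.

Lemma inner_sym x y : B x y = B y x.
Proof. by case: HB. Qed.

Lemma inner0l z : B 0 z = 0.
Proof.
case: HB => _ Blin _; have := Blin 1 0 0 z.
rewrite scaler0 addr0 mul1r => h.
by apply: (addrI (B 0 z)); rewrite addr0 -h.
Qed.

Lemma innerDl x y z : B (x + y) z = B x z + B y z.
Proof. by case: HB => _ Blin _; rewrite -[x]scale1r Blin mul1r scale1r. Qed.

Lemma innerZl k x z : B (k *: x) z = k * B x z.
Proof. by case: HB => _ Blin _; rewrite -[k *: x]addr0 Blin inner0l addr0. Qed.

Lemma innerNl x z : B (- x) z = - B x z.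
Proof. by rewrite -scaleN1r innerZl mulN1r. Qed.

Lemma innerDr x y z : B z (x + y) = B z x + B z y.
Proof. by rewrite inner_sym innerDl !(inner_sym z). Qed.

Lemma innerZr k x z : B z (k *: x) = k * B z x.
Proof. by rewrite inner_sym innerZl inner_sym. Qed.

Lemma innerNr x z : B z (- x) = - B z x.
Proof. by rewrite inner_sym innerNl inner_sym. Qed.

Lemma inner_ge0 x : 0 <= B x x.
Proof.
case: HB => _ _ Bpos; have [->|/Bpos/ltW //] := eqVneq x 0.
by rewrite inner0l.
Qed.

Context {E : 'rV[R]_d -> R}.
Hypothesis HE : forall x, E x = Num.sqrt (B x x).

Lemma euclid_ge0 x : 0 <= E x.
Proof. by rewrite HE sqrtr_ge0. Qed.

Lemma euclid_sqr x : E x ^+ 2 = B x x.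
Proof. by rewrite HE sqr_sqrtr // inner_ge0. Qed.

Lemma euclidN x : E (- x) = E x.
Proof. by rewrite !HE innerNl innerNr opprK. Qed.

Lemma euclid_eq0 x : E x = 0 -> x = 0.
Proof.
case: HB => _ _ Bpos Ex0; apply/eqP; apply: contraTT isT => /Bpos.
by rewrite -euclid_sqr Ex0 expr0n ltxx.
Qed.

Lemma euclid_sqrD v w : E (v + w) ^+ 2 = E v ^+ 2 + 2 * B v w + E w ^+ 2.
Proof. by rewrite !euclid_sqr innerDl !innerDr (inner_sym w v); ring. Qed.

Lemma euclid_sqr_orth v w :
  E (E v ^+ 2 *: w - B v w *: v) ^+ 2 = E v ^+ 2 * (E v ^+ 2 * E w ^+ 2 - B v w ^+ 2).
Proof.
rewrite !euclid_sqr innerDl !innerDr !(innerNl, innerNr, innerZl, innerZr).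
by rewrite (inner_sym w v); ring.
Qed.

End InnerProduct.

Section ExpandingPair.
Context {R : realType} {d : nat} {B : 'rV[R]_d -> 'rV[R]_d -> R}.
Context {E N : 'rV[R]_d -> R} {a b : R}.
Hypotheses (HB : is_inner_product B) (HE : forall x, E x = Num.sqrt (B x x)).
Hypotheses (HN : is_norm N) (a0 : 0 < a) (b0 : 0 < b).
Hypothesis HEN : forall x, a * E x <= N x /\ N x <= b * E x.

Lemma normN x : N (- x) = N x.
Proof. by case: HN => _ _ NZ _; rewrite -scaleN1r NZ normrN normr1 mul1r. Qed.

Context {v w : 'rV[R]_d}.
Hypothesis expanding : N (v + w) <= N v.

Lemma euclid_le_of_expanding : E w <= 2 * b / a * E v.
Proof.
have Nw : N w <= N (v + w) + N v.
  by case: HN => _ _ _ Ntri; rewrite -(normN v) -{1}(addKr v w) addrC; apply: Ntri.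
rewrite -(ler_pM2l a0) mulrA mulrCA mulfV ?gt_eqF // mulr1.
have [Ew _] := HEN w; have [_ Nv] := HEN v.
apply: le_trans Ew _; apply: le_trans Nw _.
by rewrite -mulrA mulr2n mulrDl mul1r lerD // (le_trans expanding).
Qed.

Lemma norm_orth_ge : 0 <= B v w -> B v w * N v <= N (E v ^+ 2 *: w - B v w *: v).
Proof.
case: HN => _ _ NZ Ntri beta0.
have split_v : (E v ^+ 2 + B v w) *: v = E v ^+ 2 *: (v + w) - (E v ^+ 2 *: w - B v w *: v).
  by rewrite scalerDl scalerDr opprB addrACA addrN addr0 addrC.
have := Ntri (E v ^+ 2 *: (v + w)) (- (E v ^+ 2 *: w - B v w *: v)).
rewrite -split_v normN !NZ !ger0_norm ?addr_ge0 ?sqr_ge0 //.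
have := ler_wpM2l (sqr_ge0 (E v)) expanding; lra.
Qed.

Lemma inner_sqr_le :
  0 <= B v w -> (a ^+ 2 + b ^+ 2) * B v w ^+ 2 <= b ^+ 2 * (E v * E w) ^+ 2.
Proof.
move=> beta0; have [Ev0|Ev_neq0] := eqVneq (E v) 0.
  by rewrite Ev0 (euclid_eq0 HB HE _ Ev0) (inner0l HB) mul0r expr0n !mulr0.
have Ev_gt0 : 0 < E v by rewrite lt0r Ev_neq0 (euclid_ge0 HE).
set p := E v ^+ 2 *: w - B v w *: v.
have bound : a * E v * B v w <= b * E p.
  apply: le_trans (proj2 (HEN p)); apply: le_trans (norm_orth_ge beta0).
  by rewrite mulrC ler_wpM2l // (proj1 (HEN v)).
have lhs0 : 0 <= a * E v * B v w by rewrite !mulr_ge0 // ltW.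
have := ler_pM lhs0 lhs0 bound bound.
rewrite -!expr2 !exprMn (euclid_sqr_orth HB HE) => sqr_bound.
rewrite -(ler_pM2l (exprn_gt0 2 Ev_gt0)); nra.
Qed.

Lemma inner_le_expanding : B v w <= (1 - angle_gap a b) * (E v * E w).
Proof.
apply: le_of_weighted_sqr _ _ _ _ a0 _ inner_sqr_le.
by rewrite mulr_ge0 ?(euclid_ge0 HE).
Qed.

Lemma euclid_contract : E (v + w) <= E v + curve_lambda a b * E w.
Proof.
have k0 : 0 <= 2 * b / a by rewrite divr_ge0 ?mulr_ge0 ?ltW.
have := sqr_le_of_angle_gap _ _ _ _ _ (euclid_ge0 HE v) (euclid_ge0 HE w)
  (ltW (angle_gap_gt0 a b a0)) k0 euclid_le_of_expanding inner_le_expanding.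
rewrite -(euclid_sqrD HB HE) -/(curve_lambda a b) ler_sqr // nnegrE ?(euclid_ge0 HE) //.
by rewrite addr_ge0 ?mulr_ge0 ?curve_lambda_ge0 ?(euclid_ge0 HE).
Qed.

End ExpandingPair.

Theorem proposition2p2 (R : realType) (d : nat) (a b : R) :
  0 < a -> 0 < b ->
  exists lam : R, lam < 1 /\
    forall (E N : 'rV[R]_d -> R),
      is_euclidean_norm E -> is_norm N ->
      (forall x, a * E x <= N x /\ N x <= b * E x) ->
      forall (I : R -> Prop) (gamma : R -> 'rV[R]_d),
        is_interval I -> self_expanded N I gamma -> lambda_curve lam E I gamma.
Proof.
move=> a0 b0; exists (curve_lambda a b); split; first exact: curve_lambda_lt1.
move=> E N [B [HB HE]] HN HEN I gamma _ Hse t1 t2 t3 I1 I2 I3 t12 t23.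
have expanding := Hse t1 t2 t3 I1 I2 I3 t12 t23.
rewrite -(subrKA (gamma t3)) in expanding *.
rewrite -[gamma t2 - _]opprB (euclidN HB HE).
exact: (euclid_contract HB HE HN a0 b0 HEN expanding).
Qed.
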